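(* Let $\Gamma=(\gamma_n)_{n\ge1}$ be distinct complex numbers with $\inf_n|\gamma_{n+1}|/|\gamma_n|>1$, and let $v=(v_n)$ be positive numbers with $\sum_nv_n<\infty$. If $\mu$ is a nonnegative measure on $\mathbb{C}$ with $\mu(\Gamma)=0$, then $H_{(\Gamma,v)}$ is bounded from $\ell^2_v$ to $L^2(\mathbb{C},\mu)$ if and only if \[ \sup_{n\ge1}\int_{\mathbb{C}}\frac{v_n\,d\mu(z)}{|z-\gamma_n|^2}<\infty. \]
   Context: $\ell^2_v=\{(a_n):\sum|a_n|^2v_n<\infty\}$; for $z\in\mathbb{C}\setminus\Gamma$, $H_{(\Gamma,v)}a(z)=\sum_na_nv_n/(z-\gamma_n)$. *)

From HB Require Import structures.
From mathcomp Require Import all_boot all_order all_algebra.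
From mathcomp Require Import all_classical all_reals all_analysis.
From mathcomp Require Import complex.
Set Implicit Arguments. Unset Strict Implicit. Unset Printing Implicit Defensive.
Import Order.TTheory GRing.Theory Num.Theory.
Import numFieldNormedType.Exports.
Local Open Scope ring_scope.
Local Open Scope classical_set_scope.


Section Defs.
Variable R : realType.

Definition cabs2 (w : R[i]) : R := complex.Re w ^+ 2 + complex.Im w ^+ 2.

(* the point (x,y) of the plane R*R seen as the complex number x + i y;
   the complex plane carries the product (= Borel) sigma-algebra of R*R *)
Definition toC (z : R * R) : R[i] := complex.Complex z.1 z.2.

Definition in_l2v (v : nat -> R) (a : nat -> R[i]) : Prop :=
  cvg ([series cabs2 (a n) * v n]_n @ \oo).

Definition l2v_norm2 (v : nat -> R) (a : nat -> R[i]) : R :=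
  limn ([series cabs2 (a n) * v n]_n).

Definition Hterm (gamma : nat -> R[i]) (v : nat -> R) (a : nat -> R[i])
  (w : R[i]) (n : nat) : R[i] :=
  a n * complex.Complex (v n) 0 / (w - gamma n).

Definition H (gamma : nat -> R[i]) (v : nat -> R) (a : nat -> R[i])
  (w : R[i]) : R[i] :=
  complex.Complex (limn ([series complex.Re (Hterm gamma v a w n)]_n))
                  (limn ([series complex.Im (Hterm gamma v a w n)]_n)).

End Defs.

From HB Require Import structures.
From mathcomp Require Import all_boot all_order all_algebra.
From mathcomp Require Import all_classical all_reals all_analysis.
From mathcomp Require Import complex.
From mathcomp Require Import ring lra measurable_realfun.
Set Implicit Arguments. Unset Strict Implicit. Unset Printing Implicit Defensive.
Import Order.TTheory GRing.Theory Num.Theory.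
Import numFieldNormedType.Exports.
Local Open Scope ring_scope.
Local Open Scope classical_set_scope.

(* Fix w and call n near when c |w - gamma_n| < |w| + |gamma_0|, with
   c = 1 + 4 / (q - 1) for the lacunarity ratio q; lacunarity leaves at most
   one near index. The near term of H a (w) is bounded by the square root of
   sum_n |a_n v_n / (w - gamma_n)|^2, while every far term is at most
   c |a_n| v_n / (|w| + |gamma_0|), so by Cauchy-Schwarz the far terms sum to at
   most c (sum_n v_n)^(1/2) |a| / (|w| + |gamma_0|). Hence
     |H a (w)|^2 <= 4 sum_n |a_n|^2 v_n . v_n / |w - gamma_n|^2
                   + 4 c^2 (sum_n v_n) |a|^2 / (|w| + |gamma_0|)^2,
   and (|w| + |gamma_0|)^-2 is dominated by a fixed combination of the weights
   v_0 / |w - gamma_0|^2 and v_1 / |w - gamma_1|^2. Integrating against mu and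
   using the uniform bound on the integrals of the weights v_n / |z - gamma_n|^2
   gives boundedness. Conversely, testing boundedness on the unit sequences
   e_n, for which |H e_n (w)|^2 = v_n . v_n / |w - gamma_n|^2 and |e_n|^2 = v_n,
   bounds the integrals of the weights. *)

Local Notation cmod w := (Num.sqrt (cabs2 w)).

Section FiniteSums.
Variable R : realDomainType.

Lemma sqr_sum_weighted_le (x w : nat -> R) N : (forall n, 0 <= w n) ->
  (\sum_(0 <= n < N) x n * w n) ^+ 2 <=
  (\sum_(0 <= n < N) w n) * (\sum_(0 <= n < N) x n ^+ 2 * w n).
Proof.
move=> w_ge0; elim: N => [|N IH]; first by rewrite !big_geq // expr0n /= mul0r.
rewrite !big_nat_recr //=.
set T := \sum_(0 <= n < N) x n * w n in IH *.
set S := \sum_(0 <= n < N) w n in IH *.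
set U := \sum_(0 <= n < N) x n ^+ 2 * w n in IH *.
have S_ge0 : 0 <= S by rewrite sumr_ge0.
have U_ge0 : 0 <= U by rewrite sumr_ge0 // => i _; rewrite mulr_ge0 ?sqr_ge0.
have wN := w_ge0 N.
(* AM-GM against the Cauchy-Schwarz bound for the first N terms *)
have cross : 2 * T * x N <= S * x N ^+ 2 + U.
  have TU : (T * x N) ^+ 2 <= (S * x N ^+ 2) * U.
    by rewrite exprMn [_ * U]mulrAC ler_wpM2r ?sqr_ge0.
  have XU : 0 <= S * x N ^+ 2 by rewrite mulr_ge0 ?sqr_ge0.
  have : 0 <= (S * x N ^+ 2 - U) ^+ 2 := sqr_ge0 _.
  nra.
nra.
Qed.

Lemma sqr_sum_atmost1_le (P : pred nat) (u : nat -> R) N :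
  (forall n m, P n -> P m -> n = m) ->
  (\sum_(0 <= n < N | P n) u n) ^+ 2 <= \sum_(0 <= n < N) u n ^+ 2.
Proof.
move=> P_uniq; elim: N => [|N IH]; first by rewrite !big_geq // expr0n.
rewrite !big_mkcond !big_nat_recr //= -!big_mkcond /=.
have sum_ge0 : 0 <= \sum_(0 <= n < N) u n ^+ 2 by rewrite sumr_ge0 // => i _; rewrite sqr_ge0.
case: ifP => PN; last by rewrite addr0 (le_trans IH) // lerDl sqr_ge0.
rewrite big_nat_cond big1 ?add0r ?lerDr // => n /andP[/andP[_ nN] Pn].
by rewrite (P_uniq n N Pn PN) ltnn in nN.
Qed.

End FiniteSums.

Section Modulus.
Variable R : realType.

Lemma cabs2_ge0 (w : R[i]) : 0 <= cabs2 w.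
Proof. by rewrite /cabs2 addr_ge0 ?sqr_ge0. Qed.

Lemma cmod_normc (w : R[i]) : cmod w = Normc.normc w.
Proof. by case: w. Qed.

Lemma cmod_ge0 (w : R[i]) : 0 <= cmod w.
Proof. exact: sqrtr_ge0. Qed.

Lemma sqr_cmod (w : R[i]) : cmod w ^+ 2 = cabs2 w.
Proof. by rewrite sqr_sqrtr // cabs2_ge0. Qed.

Lemma cmodM (x y : R[i]) : cmod (x * y) = cmod x * cmod y.
Proof. by rewrite !cmod_normc Normc.normcM. Qed.

Lemma cmodV (x : R[i]) : cmod x^-1 = (cmod x)^-1.
Proof. by rewrite !cmod_normc Normc.normcV. Qed.

Lemma cmodN (x : R[i]) : cmod (- x) = cmod x.
Proof. by rewrite !cmod_normc normcN. Qed.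

Lemma ler_cmodD (x y : R[i]) : cmod (x + y) <= cmod x + cmod y.
Proof. by rewrite !cmod_normc le_normcD. Qed.

Lemma ler_cmodB (x y : R[i]) : cmod x - cmod y <= cmod (x - y).
Proof. by rewrite lerBlDr; apply: le_trans (ler_cmodD _ _); rewrite subrK. Qed.

Lemma cmod_eq0 (x : R[i]) : (cmod x == 0) = (x == 0).
Proof.
apply/eqP/eqP => [|->]; last by rewrite /cabs2 /= expr0n /= addr0 sqrtr0.
by rewrite cmod_normc => /Normc.eq0_normc.
Qed.

Lemma cabs2_gt0 (x : R[i]) : x != 0 -> 0 < cabs2 x.
Proof. by move=> x0; rewrite -sqr_cmod exprn_gt0 // lt_def cmod_eq0 x0 cmod_ge0. Qed.

Lemma cmod_real (r : R) : cmod (Complex r 0) = `|r|.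
Proof. by rewrite /cabs2 /= expr0n /= addr0 sqrtr_sqr. Qed.

Lemma normr_Re_le (w : R[i]) : `|complex.Re w| <= cmod w.
Proof. by rewrite -sqrtr_sqr ler_wsqrtr // /cabs2 lerDl sqr_ge0. Qed.

Lemma normr_Im_le (w : R[i]) : `|complex.Im w| <= cmod w.
Proof. by rewrite -sqrtr_sqr ler_wsqrtr // /cabs2 lerDr sqr_ge0. Qed.

End Modulus.

Section Lacunary.
Variables (R : realType) (gamma : nat -> R[i]) (q : R).
Hypothesis q_gt1 : 1 < q.
Hypothesis gamma_lac : forall n, q * cmod (gamma n) <= cmod (gamma n.+1).

Lemma cmod_gamma_nd : nondecreasing_seq (fun n => cmod (gamma n)).
Proof.
apply/nondecreasing_seqP => n; apply: le_trans (gamma_lac n).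
by rewrite ler_peMl ?cmod_ge0 // ltW.
Qed.

Lemma cmod_gamma_lt n m : (n < m)%N -> q * cmod (gamma n) <= cmod (gamma m).
Proof. by move=> nm; apply: le_trans (gamma_lac n) (cmod_gamma_nd nm). Qed.

Definition near_const := 1 + 4 / (q - 1).

Definition near_radius (w : R[i]) := cmod w + cmod (gamma 0).

Definition is_near (w : R[i]) n := near_const * cmod (w - gamma n) < near_radius w.

Lemma near_const_gt0 : 0 < near_const.
Proof. by rewrite /near_const ltr_wpDr // divr_ge0 // subr_ge0 ltW. Qed.

Lemma near_const_eq : near_const * (q - 1) = q + 3.
Proof.
rewrite /near_const mulrDl mul1r divfK ?subr_eq0 ?gt_eqF //; lra.
Qed.

(* with [c (q - 1) = q + 3] the two nearness conditions add up to
   [(q + 3) D < (q + 3) D], where [D] is the near radius *)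
Lemma is_near_lt w n m : (n < m)%N -> is_near w n -> ~~ is_near w m.
Proof.
rewrite /is_near /near_radius -leNgt => nm near_n.
have c_gt0 := near_const_gt0.
have q1_gt0 : 0 < q + 1 by have := q_gt1; lra.
have radius_le : cmod w + cmod (gamma 0) - cmod (w - gamma n) <= 2 * cmod (gamma n).
  have := ler_cmodB w (gamma n); have /= := cmod_gamma_nd (leq0n n); lra.
have gap : (q - 1) * cmod (gamma n) <= cmod (w - gamma n) + cmod (w - gamma m).
  have := cmod_gamma_lt nm; have := ler_cmodB (gamma m) (gamma n).
  have := ler_cmodD (w - gamma n) (- (w - gamma m)).
  rewrite cmodN (_ : w - gamma n + - (w - gamma m) = gamma m - gamma n); last by ring.
  lra.
have : (q - 1) * (cmod w + cmod (gamma 0)) <=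
    (q + 1) * cmod (w - gamma n) + 2 * cmod (w - gamma m).
  have q1_ge0 : 0 <= q - 1 by rewrite subr_ge0 ltW.
  have := ler_wpM2l q1_ge0 radius_le; lra.
move=> /(ler_wpM2l (ltW c_gt0)); rewrite mulrA near_const_eq => key.
rewrite leNgt; apply/negP => near_m.
have : (q + 1) * (near_const * cmod (w - gamma n)) < (q + 1) * (cmod w + cmod (gamma 0)).
  by rewrite ltr_pM2l.
lra.
Qed.

Lemma is_near_uniq w n m : is_near w n -> is_near w m -> n = m.
Proof.
move=> near_n near_m; case: (ltngtP n m) => // nm.
- by move: (is_near_lt nm near_n); rewrite near_m.
- by move: (is_near_lt nm near_m); rewrite near_n.
Qed.

End Lacunary.

Section Series.
Variable R : realType.

Lemma ge0_series_le_lim (u : nat -> R) N : (forall n, 0 <= u n) -> cvgn (series u) ->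
  series u N <= limn (series u).
Proof.
move=> u_ge0 cu; apply: nondecreasing_cvgn_le cu N.
exact: nondecreasing_series => n _ _.
Qed.

Lemma lim_series_ge0 (u : nat -> R) : (forall n, 0 <= u n) -> cvgn (series u) ->
  0 <= limn (series u).
Proof. by move=> u_ge0 cu; have := ge0_series_le_lim 0 u_ge0 cu; rewrite /series /= big_geq. Qed.

Lemma nneseries_EFin_lim (u : nat -> R) : cvgn (series u) ->
  (\sum_(n <oo) (u n)%:E = (limn (series u))%:E)%E.
Proof.
move=> cu; rewrite -EFin_lim //; congr (limn _); apply/funext => N /=.
by rewrite sumEFin.
Qed.

Lemma cvg_series_sqr_lim_le (x : nat -> R) B :
  (forall N, (\sum_(0 <= n < N) `|x n|) ^+ 2 <= B) ->
  cvgn (series x) /\ (limn (series x)) ^+ 2 <= B.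
Proof.
move=> hB.
have B_ge0 : 0 <= B by apply: le_trans (hB 0%N); rewrite sqr_ge0.
have partial_le N : \sum_(0 <= n < N) `|x n| <= Num.sqrt B.
  rewrite -(ger0_norm (sumr_ge0 _ _)); last by move=> i _; rewrite normr_ge0.
  by rewrite -sqrtr_sqr ler_wsqrtr.
have cvg_abs : cvgn [normed series x].
  apply: nondecreasing_is_cvgn.
    by apply: nondecreasing_series => n _ _; rewrite normr_ge0.
  by exists (Num.sqrt B) => _ [N _ <-]; exact: partial_le.
split; first exact: normed_cvg.
have lim_le : `|limn (series x)| <= Num.sqrt B.
  apply: le_trans (lim_series_norm cvg_abs) _.
  by apply: limr_le => //; near=> N; exact: partial_le.
by rewrite -real_normK ?num_real // -(sqr_sqrtr B_ge0) lerXn2r ?nnegrE ?sqrtr_ge0.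
Unshelve. all: by end_near.
Qed.

Lemma cvg_series_single (f : nat -> R) n : (forall m, m != n -> f m = 0) ->
  series f @ \oo --> f n.
Proof.
move=> f_eq0; apply: cvg_near_cst; exists n.+1 => // N /= nN.
rewrite /series /= (bigD1_seq n) ?mem_index_iota ?iota_uniq //=.
by rewrite big1 ?addr0 // => m /andP[_ mn]; exact: f_eq0.
Qed.

Lemma lim_series_single (f : nat -> R) n : (forall m, m != n -> f m = 0) ->
  limn (series f) = f n.
Proof. by move=> f_eq0; apply: cvg_lim => //; exact: cvg_series_single. Qed.

End Series.

Section Measurability.
Variable R : realType.

Lemma measurable_inv : measurable_fun [set: R] (fun x : R => x^-1).
Proof.
rewrite -(setUv [set 0]); apply/measurable_funU; [exact: measurable_set1|exact: measurableC|].
split.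
  have inv_on0 : {in [set 0 : R], cst 0 =1 (fun x : R => x^-1)}.
    by move=> x /set_mem -> /=; rewrite invr0.
  exact: eq_measurable_fun inv_on0 (measurable_cst _).
apply: open_continuous_measurable_fun.
  by rewrite openC; apply: accessible_closed_set1; apply: hausdorff_accessible.
by move=> x /set_mem x0; apply: inv_continuous; exact/eqP.
Qed.

Lemma measurable_div_cabs2 (g : R[i]) (c : R) :
  measurable_fun [set: R * R] (fun z => c / cabs2 (toC z - g)).
Proof.
case: g => gr gi; rewrite /cabs2 /toC /=.
apply: measurable_funM; first exact: measurable_cst.
apply: (measurableT_comp measurable_inv).
by apply: measurable_funD; apply: measurable_funX; apply: measurable_funD;
  solve [exact: measurable_fst | exact: measurable_snd | exact: measurable_cst].
Qed.

(* no measurability needed: compare the suprema of simple minorants *)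
Lemma ge0_le_integralT d (T : measurableType d) (mu : {measure set T -> \bar R})
    (f g : T -> \bar R) :
  (forall x, (0 <= f x)%E) -> (forall x, (f x <= g x)%E) ->
  (\int[mu]_x f x <= \int[mu]_x g x)%E.
Proof.
move=> f_ge0 fg; rewrite !ge0_integralTE //; last by move=> x; exact: le_trans (fg x).
by apply: ereal_sup_le => _ [h hf <-]; exists h => //= x; exact: le_trans (hf x) (fg x).
Qed.

End Measurability.

Section Sufficiency.
Variables (R : realType) (gamma : nat -> R[i]) (v : nat -> R) (q : R).
Hypothesis q_gt1 : 1 < q.
Hypothesis gamma_lac : forall n, q * cmod (gamma n) <= cmod (gamma n.+1).
Hypothesis gamma0_neq0 : gamma 0 != 0.
Hypothesis gamma01 : gamma 0 != gamma 1.
Hypothesis v_gt0 : forall n, 0 < v n.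
Hypothesis v_sum : cvgn (series v).

Definition weight n (w : R[i]) := v n / cabs2 (w - gamma n).

Lemma weight_ge0 n w : 0 <= weight n w.
Proof. by rewrite divr_ge0 ?cabs2_ge0 // ltW. Qed.

Local Notation c := (near_const q).
Local Notation D := (near_radius gamma).

Lemma near_radius_gt0 w : 0 < D w.
Proof. by rewrite ltr_wpDl ?cmod_ge0 // lt_def cmod_eq0 gamma0_neq0 cmod_ge0. Qed.

(* the second summand only serves the point [w = gamma 0], where [weight 0]
   vanishes because [x / 0 = 0] *)
Let K := (v 0)^-1 + cabs2 (gamma 0 - gamma 1) / (4 * v 1 * cabs2 (gamma 0)).

Lemma inv_sqr_near_radius_le w : (D w ^+ 2)^-1 <= K * (weight 0 w + weight 1 w).
Proof.
have v_ge0 n : 0 <= v n by exact: ltW.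
have K1_ge0 : 0 <= (v 0)^-1 by rewrite invr_ge0.
have K2_ge0 : 0 <= cabs2 (gamma 0 - gamma 1) / (4 * v 1 * cabs2 (gamma 0)).
  by rewrite divr_ge0 ?cabs2_ge0 // !mulr_ge0 ?cabs2_ge0.
have w0_ge0 := weight_ge0 0 w; have w1_ge0 := weight_ge0 1 w.
have [->|w_neq] := eqVneq w (gamma 0).
- have D_eq : D (gamma 0) ^+ 2 = 4 * cabs2 (gamma 0).
    by rewrite /near_radius -[in RHS]sqr_cmod; ring.
  have weight0_eq0 : weight 0 (gamma 0) = 0.
    by rewrite /weight subrr /cabs2 /= expr0n /= addr0 invr0 mulr0.
  have K2_eq : cabs2 (gamma 0 - gamma 1) / (4 * v 1 * cabs2 (gamma 0)) * weight 1 (gamma 0)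
      = (4 * cabs2 (gamma 0))^-1.
    rewrite /weight; field.
    by rewrite !gt_eqF ?v_gt0 ?cabs2_gt0 ?subr_eq0.
  by rewrite D_eq weight0_eq0 add0r /K [leRHS]mulrDl K2_eq lerDr mulr_ge0 // weight_ge0.
- have dist_gt0 : 0 < cabs2 (w - gamma 0) by rewrite cabs2_gt0 ?subr_eq0.
  have dist_le : cabs2 (w - gamma 0) <= D w ^+ 2.
    rewrite -sqr_cmod ler_pXn2r ?nnegrE ?cmod_ge0 ?addr_ge0 ?cmod_ge0 //.
    by have := ler_cmodD w (- gamma 0); rewrite cmodN.
  have K1_eq : (v 0)^-1 * weight 0 w = (cabs2 (w - gamma 0))^-1.
    by rewrite /weight mulrA mulVf ?gt_eqF // mul1r.
  apply: le_trans (_ : (cabs2 (w - gamma 0))^-1 <= _).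
    by rewrite lef_pV2 ?posrE // (lt_le_trans dist_gt0).
  rewrite /K [leRHS]mulrDr [in leRHS]mulrDl K1_eq -addrA lerDl.
  by rewrite addr_ge0 // mulr_ge0 // addr_ge0.
Qed.

Lemma K_ge0 : 0 <= K.
Proof.
have v_ge0 n : 0 <= v n by exact: ltW.
by rewrite addr_ge0 ?invr_ge0 // divr_ge0 ?cabs2_ge0 // !mulr_ge0 ?cabs2_ge0.
Qed.

Let cV := 4 * c ^+ 2 * limn (series v).

Lemma cV_ge0 : 0 <= cV.
Proof.
have c_ge0 := ltW (near_const_gt0 q_gt1).
have v_ge0 n : 0 <= v n by exact: ltW.
by rewrite !mulr_ge0 ?sqr_ge0 ?lim_series_ge0.
Qed.

Variables (mu : {measure set (R * R) -> \bar R}) (M : R).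
Hypothesis weight_int_le : forall n, (\int[mu]_z (weight n (toC z))%:E <= M%:E)%E.

Lemma measurable_weight n : measurable_fun [set: R * R] (fun z => weight n (toC z)).
Proof. exact: measurable_div_cabs2. Qed.

Section Pointwise.
Variable a : nat -> R[i].
Hypothesis a_l2 : in_l2v v a.
Local Notation Ht n w := (Hterm gamma v a w n).

Lemma cmod_Hterm n w : cmod (Ht n w) = cmod (a n) * v n / cmod (w - gamma n).
Proof. by rewrite /Hterm !cmodM cmodV cmod_real ger0_norm // ltW. Qed.

Lemma cabs2_Hterm n w : cabs2 (Ht n w) = cabs2 (a n) * v n * weight n w.
Proof.
rewrite -[LHS]sqr_cmod cmod_Hterm -[in RHS](sqr_cmod (a n)) /weight.
by rewrite -[in RHS](sqr_cmod (w - gamma n)) -exprVn; ring.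
Qed.

Lemma cmod_Hterm_far n w : ~~ is_near gamma q w n ->
  cmod (Ht n w) <= c / D w * (cmod (a n) * v n).
Proof.
rewrite /is_near -leNgt => far.
have D_gt0 := near_radius_gt0 w.
have dist_gt0 : 0 < cmod (w - gamma n).
  rewrite lt_def cmod_ge0 andbT; apply: contraTneq far => ->.
  by rewrite mulr0 -ltNge.
rewrite cmod_Hterm [leRHS]mulrC ler_wpM2l ?mulr_ge0 ?cmod_ge0 ?(ltW (v_gt0 n)) //.
by rewrite ler_pdivlMr // mulrC ler_pdivrMr.
Qed.

Lemma sqr_sum_weighted_cmod_le N :
  (\sum_(0 <= n < N) cmod (a n) * v n) ^+ 2 <= limn (series v) * l2v_norm2 v a.
Proof.
have v_ge0 n : 0 <= v n by exact: ltW.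
apply: le_trans (sqr_sum_weighted_le _ N v_ge0) _.
apply: ler_pM.
- by rewrite sumr_ge0.
- by rewrite sumr_ge0 // => n _; rewrite mulr_ge0 ?sqr_ge0.
- exact: ge0_series_le_lim.
- under eq_bigr do rewrite sqr_cmod.
  by apply: ge0_series_le_lim a_l2 => n; rewrite mulr_ge0 ?cabs2_ge0.
Qed.

(* only the near term escapes the Cauchy-Schwarz bound, and it is controlled
   by the full square sum *)
Lemma series_part_Hterm_le (f : R[i] -> R) w g :
  (forall z, `|f z| <= cmod z) ->
  (forall N, \sum_(0 <= n < N) cabs2 (Ht n w) <= g) ->
  cvgn (series (fun n => f (Ht n w))) /\
  limn (series (fun n => f (Ht n w))) ^+ 2 <=
     2 * g + 2 * ((c / D w) ^+ 2 * (limn (series v) * l2v_norm2 v a)).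
Proof.
move=> f_le g_ub; apply: cvg_series_sqr_lim_le => N.
set k := c / D w.
have k_ge0 : 0 <= k by rewrite divr_ge0 ?ltW ?near_const_gt0 ?near_radius_gt0.
set P := \sum_(0 <= n < N | is_near gamma q w n) cmod (Ht n w).
set Q := \sum_(0 <= n < N) cmod (a n) * v n.
have P_ge0 : 0 <= P by rewrite sumr_ge0 // => n _; rewrite cmod_ge0.
have Q_ge0 : 0 <= Q by rewrite sumr_ge0 // => n _; rewrite mulr_ge0 ?cmod_ge0 ?ltW.
have split_le : \sum_(0 <= n < N) `|f (Ht n w)| <= P + k * Q.
  rewrite [P]big_mkcond [k * Q]mulr_sumr -big_split /=; apply: ler_sum => n _.
  apply: le_trans (f_le _) _; case: ifP => [_|/negbT far].
    by rewrite lerDl mulr_ge0 // mulr_ge0 ?cmod_ge0 ?ltW.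
  by rewrite add0r cmod_Hterm_far.
have P_le : P ^+ 2 <= g.
  have near_uniq := @is_near_uniq _ _ _ q_gt1 gamma_lac w.
  apply: le_trans (sqr_sum_atmost1_le _ N near_uniq) _.
  by apply: le_trans (g_ub N); apply: ler_sum => n _; rewrite sqr_cmod.
have Q_le : (k * Q) ^+ 2 <= k ^+ 2 * (limn (series v) * l2v_norm2 v a).
  by rewrite exprMn ler_wpM2l ?sqr_ge0 ?sqr_sum_weighted_cmod_le.
have := sqr_ge0 (P - k * Q).
have : (\sum_(0 <= n < N) `|f (Ht n w)|) ^+ 2 <= (P + k * Q) ^+ 2.
  rewrite ler_pXn2r ?nnegrE ?addr_ge0 ?(mulr_ge0 k_ge0 Q_ge0) //.
  by rewrite sumr_ge0 // => n _; rewrite normr_ge0.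
nra.
Qed.

Local Notation G w := (\sum_(n <oo) (cabs2 (Ht n w))%:E)%E.

Lemma cabs2_H_le w :
  ((cabs2 (H gamma v a w))%:E <=
   4%:E * G w + (4 * ((c / D w) ^+ 2 * (limn (series v) * l2v_norm2 v a)))%:E)%E.
Proof.
have G_ge0 : (0 <= G w)%E by apply: nneseries_ge0 => n _ _; rewrite lee_fin cabs2_ge0.
move: G_ge0; case Gg : (G w) => [g| |//] _; last first.
  by rewrite muleC gt0_mulye ?lte_fin // addye // leey.
have g_ub N : \sum_(0 <= n < N) cabs2 (Ht n w) <= g.
  rewrite -lee_fin -Gg -sumEFin.
  by apply: nneseries_lim_ge => n _ _; rewrite lee_fin cabs2_ge0.
have [_ Re_le] := series_part_Hterm_le (@normr_Re_le R) g_ub.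
have [_ Im_le] := series_part_Hterm_le (@normr_Im_le R) g_ub.
rewrite -EFinM -EFinD lee_fin /cabs2 /H /=; lra.
Qed.

Lemma l2v_norm2_ge0 : 0 <= l2v_norm2 v a.
Proof. by apply: lim_series_ge0 a_l2 => n; rewrite mulr_ge0 ?cabs2_ge0 ?ltW. Qed.

Lemma cabs2_H_le_weights w :
  ((cabs2 (H gamma v a w))%:E <=
   4%:E * G w + (cV * K * l2v_norm2 v a)%:E * ((weight 0 w)%:E + (weight 1 w)%:E))%E.
Proof.
apply: le_trans (cabs2_H_le w) _; apply: leeD2l; rewrite -EFinD -EFinM lee_fin.
have -> : 4 * ((c / D w) ^+ 2 * (limn (series v) * l2v_norm2 v a)) =
    cV * l2v_norm2 v a * (D w ^+ 2)^-1 by rewrite /cV expr_div_n; ring.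
have -> : cV * K * l2v_norm2 v a * (weight 0 w + weight 1 w) =
    cV * l2v_norm2 v a * (K * (weight 0 w + weight 1 w)) by ring.
by apply: ler_wpM2l; [exact: mulr_ge0 cV_ge0 l2v_norm2_ge0|exact: inv_sqr_near_radius_le].
Qed.

Lemma measurable_cabs2_Hterm n :
  measurable_fun [set: R * R] (fun z => (cabs2 (Ht n (toC z)))%:E).
Proof.
apply/measurable_EFinP; under eq_fun do rewrite cabs2_Hterm.
exact: measurable_funM (measurable_cst _) (measurable_weight n).
Qed.

Lemma integral_sum_cabs2_Hterm_le :
  (\int[mu]_z G (toC z) <= (l2v_norm2 v a * M)%:E)%E.
Proof.
have coef_ge0 n : 0 <= cabs2 (a n) * v n by rewrite mulr_ge0 ?cabs2_ge0 ?ltW.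
rewrite integral_nneseries //; last 2 first.
- by move=> n; exact: measurable_cabs2_Hterm.
- by move=> n z _; rewrite lee_fin cabs2_ge0.
apply: le_trans (_ : (\sum_(n <oo) (M%:E * (cabs2 (a n) * v n)%:E) <= _)%E).
  apply: lee_nneseries => [n _ _|n _]; first by apply: integral_ge0 => z _; rewrite lee_fin cabs2_ge0.
  under eq_integral do rewrite cabs2_Hterm EFinM.
  rewrite ge0_integralZl ?lee_fin //; last by move=> z _; rewrite lee_fin weight_ge0.
    by rewrite [leRHS]muleC lee_wpmul2l ?lee_fin.
  by apply/measurable_EFinP; exact: measurable_weight.
rewrite nneseriesZl; last by move=> n _; rewrite lee_fin.
by rewrite nneseries_EFin_lim // -EFinM mulrC.
Qed.

Lemma integral_cabs2_H_le : (\int[mu]_z (cabs2 (H gamma v a (toC z)))%:E <=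
  ((4 * M + 2 * (cV * K) * M) * l2v_norm2 v a)%:E)%E.
Proof.
set cKA := cV * K * l2v_norm2 v a.
have cKA_ge0 : (0 <= cKA%:E)%E.
  by rewrite lee_fin mulr_ge0 ?l2v_norm2_ge0 // mulr_ge0 ?cV_ge0 ?K_ge0.
have weight_ge0E n z : [set: R * R] z -> (0 <= (weight n (toC z))%:E)%E.
  by rewrite lee_fin weight_ge0.
have mweight n : measurable_fun [set: R * R] (fun z => (weight n (toC z))%:E).
  by apply/measurable_EFinP; exact: measurable_weight.
have mG : measurable_fun [set: R * R] (fun z => G (toC z)).
  apply: ge0_emeasurable_sum => [n z _ _|n _]; first by rewrite lee_fin cabs2_ge0.
  exact: measurable_cabs2_Hterm.
have G_ge0 z : [set: R * R] z -> (0 <= 4%:E * G (toC z))%E.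
  move=> _; rewrite mule_ge0 ?lee_fin //.
  by apply: nneseries_ge0 => n _ _; rewrite lee_fin cabs2_ge0.
have W_ge0 z : [set: R * R] z ->
    (0 <= cKA%:E * ((weight 0 (toC z))%:E + (weight 1 (toC z))%:E))%E.
  by move=> _; rewrite mule_ge0 // adde_ge0 ?weight_ge0E.
apply: le_trans (ge0_le_integralT mu _ (fun z => cabs2_H_le_weights (toC z))) _.
  by move=> z; rewrite lee_fin cabs2_ge0.
have mW : measurable_fun [set: R * R]
    (fun z => (weight 0 (toC z))%:E + (weight 1 (toC z))%:E)%E.
  exact: emeasurable_funD.
rewrite (ge0_integralD mu measurableT G_ge0 (measurable_funeM _ mG) W_ge0
  (measurable_funeM _ mW)).
have G_nneg z : [set: R * R] z -> (0 <= G (toC z))%E.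
  by move=> _; apply: nneseries_ge0 => n _ _; rewrite lee_fin cabs2_ge0.
have W_nneg z : [set: R * R] z -> (0 <= (weight 0 (toC z))%:E + (weight 1 (toC z))%:E)%E.
  by move=> zT; rewrite adde_ge0 ?weight_ge0E.
rewrite (ge0_integralZl _ _ _ G_nneg) ?lee_fin // (ge0_integralZl _ _ _ W_nneg) //.
rewrite (ge0_integralD mu measurableT (weight_ge0E 0) (mweight 0) (weight_ge0E 1) (mweight 1)).
apply: le_trans (leeD (lee_wpmul2l _ integral_sum_cabs2_Hterm_le)
  (lee_wpmul2l cKA_ge0 (leeD (weight_int_le 0) (weight_int_le 1)))) _.
  by rewrite lee_fin.
by rewrite -EFinD lee_fin /cKA; lra.
Qed.

End Pointwise.

Lemma H_bounded : exists C, forall a, in_l2v v a ->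
  (\int[mu]_z (cabs2 (H gamma v a (toC z)))%:E <= (C * l2v_norm2 v a)%:E)%E.
Proof. by exists (4 * M + 2 * (cV * K) * M) => a a_l2; exact: integral_cabs2_H_le. Qed.

End Sufficiency.

Section Necessity.
Variables (R : realType) (gamma : nat -> R[i]) (v : nat -> R).
Hypothesis v_gt0 : forall n, 0 < v n.
Variables (mu : {measure set (R * R) -> \bar R}) (C : R).
Hypothesis H_bounded : forall a, in_l2v v a ->
  (\int[mu]_z (cabs2 (H gamma v a (toC z)))%:E <= (C * l2v_norm2 v a)%:E)%E.

Definition unit_seq (n m : nat) : R[i] := (m == n)%:R.

Lemma cabs2_unit_seq n m : cabs2 (unit_seq n m) = (m == n)%:R.
Proof. by rewrite /cabs2 /unit_seq /=; case: eqP; rewrite /= ?expr1n expr0n /= addr0. Qed.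

Lemma l2v_norm2_unit_seq n : in_l2v v (unit_seq n) /\ l2v_norm2 v (unit_seq n) = v n.
Proof.
have off_eq0 m : m != n -> cabs2 (unit_seq n m) * v m = 0.
  by rewrite cabs2_unit_seq => /negbTE ->; rewrite mul0r.
have on_eq : cabs2 (unit_seq n n) * v n = v n by rewrite cabs2_unit_seq eqxx mul1r.
split; last by rewrite /l2v_norm2 (lim_series_single off_eq0).
by apply/cvg_ex; exists (cabs2 (unit_seq n n) * v n); exact: cvg_series_single.
Qed.

Lemma H_unit_seq n w : H gamma v (unit_seq n) w = Hterm gamma v (unit_seq n) w n.
Proof.
have off_eq0 m : m != n -> Hterm gamma v (unit_seq n) w m = 0.
  by rewrite /Hterm /unit_seq => /negbTE ->; rewrite !mul0r.
rewrite /H (@lim_series_single _ (fun m => complex.Re (Hterm gamma v _ w m)) n); last first.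
  by move=> m /off_eq0 ->.
rewrite (@lim_series_single _ (fun m => complex.Im (Hterm gamma v _ w m)) n); last first.
  by move=> m /off_eq0 ->.
by case: (Hterm _ _ _ _ _).
Qed.

Lemma integral_weight_le n : (\int[mu]_z (weight gamma v n (toC z))%:E <= C%:E)%E.
Proof.
have [e_l2 e_norm] := l2v_norm2_unit_seq n.
have := H_bounded e_l2; rewrite e_norm.
have -> : (fun z => (cabs2 (H gamma v (unit_seq n) (toC z)))%:E) =
    (fun z => (v n)%:E * (weight gamma v n (toC z))%:E)%E.
  apply/funext => z; rewrite H_unit_seq -EFinM -sqr_cmod /Hterm /unit_seq eqxx mul1r.
  rewrite cmodM cmodV cmod_real ger0_norm ?ltW // /weight.
  by rewrite -[in RHS](sqr_cmod (toC z - gamma n)) -exprVn; congr (_%:E); ring.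
have weight_nneg z : [set: R * R] z -> (0 <= (weight gamma v n (toC z))%:E)%E.
  by rewrite lee_fin weight_ge0.
have mweight : measurable_fun [set: R * R] (fun z => (weight gamma v n (toC z))%:E).
  by apply/measurable_EFinP; exact: measurable_div_cabs2.
rewrite (ge0_integralZl _ _ _ weight_nneg) ?lee_fin ?(ltW (v_gt0 n)) //.
by rewrite mulrC EFinM lee_pmul2l ?lte_fin.
Qed.

End Necessity.

Theorem corollary2 (R : realType) (gamma : nat -> R[i]) (v : nat -> R)
  (gamma_inj : injective gamma)
  (gamma_neq0 : forall n, gamma n != 0)
  (gamma_lac : exists2 q : R, 1 < q &
      forall n, q * Num.sqrt (cabs2 (gamma n)) <= Num.sqrt (cabs2 (gamma n.+1)))
  (v_pos : forall n, 0 < v n)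
  (v_sum : cvg ([series v n]_n @ \oo))
  (mu : {measure set (R * R)%type -> \bar R})
  (mu_Gamma : mu [set z | exists n, toC z = gamma n] = 0%E) :
  (exists C : R, forall a : nat -> R[i], in_l2v v a ->
      (\int[mu]_z (cabs2 (H gamma v a (toC z)))%:E <= (C * l2v_norm2 v a)%:E)%E)
  <->
  (exists M : R, forall n : nat,
      (\int[mu]_z (v n / cabs2 (toC z - gamma n))%:E <= M%:E)%E).
Proof.
split=> [[C H_le]|[M weight_int_le]].
  by exists C => n; have := integral_weight_le v_pos H_le n.
have [q q_gt1 lac] := gamma_lac.
have gamma01 : gamma 0 != gamma 1 by apply/eqP => /gamma_inj.
exact: H_bounded q_gt1 lac (gamma_neq0 0) gamma01 v_pos v_sum mu M weight_int_le.
Qed.
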